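(* Let $X$ be a digraph of order $n$ whose $H$-spectrum is $\{-(n-1), 1^{(n-1)}\}$ (i.e., $-(n-1)$ once and $1$ with multiplicity $n-1$). Then $X$ is isomorphic to one of $K_1$, $K_2$, $T_2$, $K_3'$, $K_4'$.
   Context: A digraph has a finite vertex set and an arc set of ordered pairs of distinct vertices; $\{x,y\}$ is a digon if both $xy,yx$ are arcs. The Hermitian adjacency matrix $H(X)$ has $(u,v)$-entry $1$ if $uv$ and $vu$ are arcs, $i$ if only $uv$ is an arc, $-i$ if only $vu$ is an arc, and $0$ otherwise; the $H$-spectrum is the multiset of eigenvalues of $H(X)$. $K_1$ is a single vertex; $K_2$ is a single digon on two vertices; $T_2$ is a single arc on two vertices. $K_3'$ has vertices $a,b,c$, a digon $\{a,b\}$ and arcs $ac$, $cb$. $K_4'$ has vertices $x_1,x_2,x_3,x_4$, arcs $x_1x_2,x_2x_3,x_3x_4,x_4x_1$, and digons $\{x_1,x_3\}$ and $\{x_2,x_4\}$. *)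

From HB Require Import structures.
From mathcomp Require Import all_boot all_order all_algebra algC.
Set Implicit Arguments. Unset Strict Implicit. Unset Printing Implicit Defensive.
Import Order.TTheory GRing.Theory Num.Theory.
Local Open Scope ring_scope.

(* A digraph of order n: vertex set 'I_n, arc relation D (uv is an arc iff D u v).
   Arcs join distinct vertices: D must be irreflexive (imposed as a hypothesis). *)
Definition digraph_loopless (n : nat) (D : rel 'I_n) : Prop := forall u, ~~ D u u.

Definition hermAdj (n : nat) (D : rel 'I_n) : 'M[algC]_n :=
  \matrix_(u, v)
    (if D u v && D v u then 1
     else if D u v then 'i
     else if D v u then - 'i
     else 0).

(* H-spectrum of X is the multiset of eigenvalues of H(X), i.e. the roots (with
   multiplicity) of its characteristic polynomial.  The H-spectrum of an order
   n.+1 digraph equals {-(n), 1^(n)} iff char_poly H = (X + n) (X - 1)^n. *)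
Definition H_spectrum_is_main (n : nat) (D : rel 'I_n.+1) : Prop :=
  char_poly (hermAdj D) = ('X + (n%:R)%:P) * ('X - 1) ^+ n.

Definition digraph_iso (n m : nat) (D : rel 'I_n) (E : rel 'I_m) : Prop :=
  exists f : 'I_n -> 'I_m, bijective f /\ forall u v, D u v = E (f u) (f v).

Definition arcs_of (n : nat) (s : seq (nat * nat)) : rel 'I_n :=
  fun u v => ((u : nat), (v : nat)) \in s.

Definition K1 : rel 'I_1 := arcs_of [::].
Definition K2 : rel 'I_2 := arcs_of [:: (0%N,1%N); (1%N,0%N)].
Definition T2 : rel 'I_2 := arcs_of [:: (0%N,1%N)].
(* K_3' : a=0, b=1, c=2; digon {a,b}, arcs ac, cb *)
Definition K3' : rel 'I_3 := arcs_of [:: (0%N,1%N); (1%N,0%N); (0%N,2%N); (2%N,1%N)].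
(* K_4' : x1..x4 = 0..3; arcs x1x2,x2x3,x3x4,x4x1; digons {x1,x3},{x2,x4} *)
Definition K4' : rel 'I_4 :=
  arcs_of [:: (0%N,1%N); (1%N,2%N); (2%N,3%N); (3%N,0%N); (0%N,2%N); (2%N,0%N); (1%N,3%N); (3%N,1%N)].

From HB Require Import structures.
From mathcomp Require Import all_boot all_order all_algebra algC zify ring.
Set Implicit Arguments. Unset Strict Implicit. Unset Printing Implicit Defensive.
Import Order.TTheory GRing.Theory Num.Theory.

(* H is Hermitian and annihilated by (X + n)(X - 1)^n, so it is annihilated by
   (X + n)(X - 1): a Hermitian nilpotent matrix vanishes.  Hence
   H^2 = n - (n - 1) H.  On the diagonal this says that any two distinct vertices
   are adjacent.  Off the diagonal, after multiplication by H_vu, it says that the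
   n - 1 fourth roots of unity H_uw H_wv H_vu (w <> u, v) sum to -(n - 1), so all
   of them equal -1.  Consequently every three vertices span exactly one digon,
   which is impossible on five vertices, and the orders 2, 3 and 4 are settled by
   an exhaustive search. *)

Section HermitianMatrices.
Local Open Scope ring_scope.
Variables (C : numClosedFieldType) (m : nat).
Implicit Types X Y : 'M[C]_m.+1.

Definition hermitian_mx X := forall i j, X j i = (X i j)^*.

Lemma hermitian_mx1 : hermitian_mx 1.
Proof. by move=> i j; rewrite !mxE eq_sym rmorph_nat. Qed.

Lemma hermitian_mx_nat k : hermitian_mx k%:R%:M.
Proof. by move=> i j; rewrite !mxE eq_sym rmorphMn rmorph_nat. Qed.

Lemma hermitian_mxD X Y : hermitian_mx X -> hermitian_mx Y -> hermitian_mx (X + Y).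
Proof. by move=> hX hY i j; rewrite !mxE hX hY rmorphD. Qed.

Lemma hermitian_mxB X Y : hermitian_mx X -> hermitian_mx Y -> hermitian_mx (X - Y).
Proof. by move=> hX hY i j; rewrite !mxE hX hY rmorphB. Qed.

Lemma hermitian_mxM_comm X Y : hermitian_mx X -> hermitian_mx Y ->
  GRing.comm X Y -> hermitian_mx (X * Y).
Proof.
move=> hX hY cXY i j; rewrite {1}cXY !mxE rmorph_sum; apply: eq_bigr => k _.
by rewrite hY hX rmorphM mulrC.
Qed.

Lemma hermitian_mxX X k : hermitian_mx X -> hermitian_mx (X ^+ k).
Proof.
move=> hX; elim: k => [|k IHk]; first exact: hermitian_mx1.
by rewrite exprS; apply: hermitian_mxM_comm => //; apply: commrX.
Qed.

(* The (i, i) entry of X * X is the sum of the squared moduli of row i. *)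
Lemma hermitian_mx_sqr_eq0 X : hermitian_mx X -> X * X = 0 -> X = 0.
Proof.
move=> hX XX0; apply/matrixP => i j.
have sum_sqr0 : \sum_k `|X i k| ^+ 2 = 0.
  have := congr1 (fun Y => Y i i) XX0; rewrite !mxE => sum0.
  by rewrite -[RHS]sum0; apply: eq_bigr => k _; rewrite normCK (hX i k).
have := psumr_eq0P (fun k _ => exprn_ge0 2 (normr_ge0 (X i k))) sum_sqr0.
by move=> /(_ j isT) /eqP; rewrite expf_eq0 /= normr_eq0 mxE => /eqP.
Qed.

Lemma hermitian_mx_nilpotent X k : hermitian_mx X -> X ^+ k.+1 = 0 -> X = 0.
Proof.
elim: k X => [|k IHk] X hX; first by rewrite expr1.
move=> Xk0; apply: IHk => //.
apply: hermitian_mx_sqr_eq0; first exact: hermitian_mxX.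
by rewrite -exprD -addSnnS exprD Xk0 mul0r.
Qed.

End HermitianMatrices.

Section PowersOfI.
Local Open Scope ring_scope.

Lemma ipow_mod4 k : ('i : algC) ^+ k = 'i ^+ (k %% 4).
Proof.
have i4 : ('i : algC) ^+ 4 = 1 by rewrite (exprM _ 2 2) sqrCi sqrrN expr1n.
by rewrite {1}(divn_eq k 4) mulnC exprD exprM i4 expr1n mul1r.
Qed.

Definition twice_re_ipowD1 (k : nat) : nat := nth 0%N [:: 4; 2; 0; 2]%N (k %% 4).

Lemma twice_re_ipowD1E k :
  ('i ^+ k + 1) + ('i ^+ k + 1)^* = (twice_re_ipowD1 k)%:R :> algC.
Proof.
rewrite ipow_mod4 /twice_re_ipowD1 rmorphD rmorph1.
have : (k %% 4 < 4)%N by rewrite ltn_mod.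
case: (k %% 4)%N => [|[|[|[|//]]]] _ /=.
- by rewrite expr0 rmorph1; ring.
- by rewrite expr1 (conjCi algC); ring.
- by rewrite sqrCi rmorphN rmorph1; ring.
- by rewrite exprS sqrCi mulrN1 rmorphN /= (conjCi algC); ring.
Qed.

Lemma twice_re_ipowD1_eq0 k : (twice_re_ipowD1 k == 0%N) = (k %% 4 == 2)%N.
Proof.
rewrite /twice_re_ipowD1; have : (k %% 4 < 4)%N by rewrite ltn_mod.
by case: (k %% 4)%N => [|[|[|[|//]]]].
Qed.

(* Each [('i ^+ k w) + 1] has non-negative real part, zero only for [-1]. *)
Lemma ipow_sum_eq_opp_card (I : finType) (P : pred I) (k : I -> nat) :
  \sum_(w | P w) 'i ^+ k w = - #|P|%:R :> algC ->
  forall w, P w -> (k w %% 4 = 2)%N.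
Proof.
move=> sum_ipow.
have sumD1 : \sum_(w | P w) ('i ^+ k w + 1) = 0 :> algC.
  by rewrite big_split /= sum_ipow sumr_const addNr.
have : \sum_(w | P w) (('i ^+ k w + 1) + ('i ^+ k w + 1)^*) = 0 :> algC.
  by rewrite big_split /= -rmorph_sum sumD1 rmorph0 addr0.
under eq_bigr do rewrite twice_re_ipowD1E.
rewrite -natr_sum => /eqP; rewrite pnatr_eq0 sum_nat_eq0.
by move=> /forallP all0 w Pw; apply/eqP; rewrite -twice_re_ipowD1_eq0; apply: implyP Pw.
Qed.

End PowersOfI.

Section SemicompleteDigraphs.
Variable T : eqType.
Implicit Types (D : rel T) (u v w : T).

(* For adjacent u, v this is the k with H_uv = 'i ^+ k, so [negative_triangles]
   says that H_uw H_wv H_vu = -1. *)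
Definition arc_code D u v : nat :=
  if D u v && D v u then 0 else if D u v then 1 else 3.

Definition digon D u v := D u v && D v u.

Definition semicomplete D := forall u v, u != v -> D u v || D v u.

Definition negative_triangles D := forall u v w, u != v -> w != u -> w != v ->
  ((arc_code D u w + arc_code D w v + arc_code D v u) %% 4 = 2)%N.

Lemma digon_triple D u v w : semicomplete D -> negative_triangles D ->
  u != v -> u != w -> v != w -> (digon D u v + digon D u w + digon D v w = 1)%N.
Proof.
move=> Dcomplete Dtri uv uw vw.
have := Dtri u v w uv; rewrite eq_sym uw eq_sym vw => /(_ isT isT).
move: (Dcomplete _ _ uv) (Dcomplete _ _ uw) (Dcomplete _ _ vw).
rewrite /arc_code /digon.
by case: (D u v); case: (D v u); case: (D u w); case: (D w u);
   case: (D v w); case: (D w v).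
Qed.

End SemicompleteDigraphs.

Lemma negative_triangles_order_le4 n (D : rel 'I_n.+1) :
  semicomplete D -> negative_triangles D -> (n <= 3)%N.
Proof.
move=> Dcomplete Dtri; rewrite leqNgt; apply/negP => n_gt3.
have neq i j : (i < 5)%N -> (j < 5)%N -> i != j -> (inord i : 'I_n.+1) != inord j.
  move=> ilt jlt; apply: contra => /eqP/(congr1 val).
  by rewrite /= !inordK //; [move=> ->|lia|lia].
pose d i j := digon D (inord i) (inord j).
have one i j k : (i < j < k)%N -> (k < 5)%N -> (d i j + d i k + d j k = 1)%N.
  by move=> /andP[ij jk] k5; apply: digon_triple => //; apply: neq; lia.
move: (one 0 1 2 isT isT) (one 0 1 3 isT isT) (one 0 1 4 isT isT)
      (one 0 2 3 isT isT) (one 0 2 4 isT isT) (one 0 3 4 isT isT)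
      (one 1 2 3 isT isT) (one 1 2 4 isT isT) (one 1 3 4 isT isT)
      (one 2 3 4 isT isT).
by case: (d 0 1); case: (d 0 2); case: (d 0 3); case: (d 0 4); case: (d 1 2);
   case: (d 1 3); case: (d 1 4); case: (d 2 3); case: (d 2 4); case: (d 3 4).
Qed.

Section HermitianAdjacency.
Local Open Scope ring_scope.
Variables (n : nat) (D : rel 'I_n.+1).
Local Notation H := (hermAdj D).

Lemma hermAdj_hermitian : hermitian_mx H.
Proof.
move=> u v; rewrite !mxE.
case: (D u v); case: (D v u);
  by rewrite /= ?rmorph1 ?rmorph0 ?rmorphN /= ?(conjCi algC) ?opprK.
Qed.

Lemma hermAdj_mul_sym u v : H u v * H v u = (D u v || D v u)%:R.
Proof.
rewrite !mxE; case: (D u v); case: (D v u); rewrite /= ?mulr1 ?mul0r ?mulr0 //.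
  by rewrite mulrN -expr2 sqrCi opprK.
by rewrite mulNr -expr2 sqrCi opprK.
Qed.

Hypothesis Dloopless : digraph_loopless D.

Lemma hermAdj_diag u : H u u = 0.
Proof. by rewrite !mxE; have := Dloopless u; case: (D u u). Qed.

Hypothesis Dspec : H_spectrum_is_main D.

Lemma hermAdj_Cayley_Hamilton : (H + n%:R%:M) * (H - 1) ^+ n = 0.
Proof.
have := Cayley_Hamilton H; rewrite Dspec rmorphM rmorphXn rmorphD rmorphB rmorph1.
by rewrite /= horner_mx_X horner_mx_C.
Qed.

Hypothesis n_gt0 : (0 < n)%N.

Lemma hermAdj_min_poly : (H + n%:R%:M) * (H - 1) = 0.
Proof.
have cHn : GRing.comm H n%:R%:M by rewrite /GRing.comm -!mulmxE scalar_mxC.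
have cHnH1 : GRing.comm (H + n%:R%:M) (H - 1).
  apply: commrB; last exact: commr1.
  by apply: commr_sym; apply: commrD; [exact: commr_refl | exact: cHn].
apply: (@hermitian_mx_nilpotent _ _ _ n.-1).
  apply: hermitian_mxM_comm => //; last first.
    by apply: hermitian_mxB; [exact: hermAdj_hermitian | exact: hermitian_mx1].
  by apply: hermitian_mxD; [exact: hermAdj_hermitian | exact: hermitian_mx_nat].
rewrite prednK // exprMn_comm //.
have -> : (H + n%:R%:M) ^+ n = (H + n%:R%:M) ^+ n.-1 * (H + n%:R%:M).
  by rewrite -exprSr prednK.
by rewrite -mulrA hermAdj_Cayley_Hamilton mulr0.
Qed.

Lemma hermAdj_sqr_entry u v :
  \sum_w H u w * H w v + (n%:R - 1) * H u v = n%:R *+ (u == v).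
Proof.
move/matrixP/(_ u v): hermAdj_min_poly.
rewrite mulrDl !mulrBr !mulr1 -!mulmxE mul_scalar_mx !mxE => uv0.
by apply/eqP; rewrite -subr_eq0; apply/eqP; rewrite -[RHS]uv0; ring.
Qed.

Lemma hermAdj_semicomplete : semicomplete D.
Proof.
move=> u v uv; pose adj w := D u w || D w u.
have sum_adj : (\sum_(w | w != u) adj w)%N = n.
  have := hermAdj_sqr_entry u u.
  rewrite hermAdj_diag mulr0 addr0 eqxx mulr1n => sumHH.
  have : \sum_w (adj w)%:R = n%:R :> algC.
    by rewrite -[RHS]sumHH; apply: eq_bigr => w _; rewrite hermAdj_mul_sym.
  rewrite -natr_sum => /eqP; rewrite eqr_nat (bigD1 u) //= /adj orbb.
  by move: (Dloopless u) => /negbTE -> /eqP.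
have : (\sum_(w | w != u) (adj w + ~~ adj w))%N = n.
  transitivity (\sum_(w | w != u) 1)%N.
    by apply: eq_bigr => w _; case: (adj w).
  by rewrite sum1_card cardC1 card_ord.
rewrite big_split /= sum_adj -[RHS]addn0 => /addnI /eqP; rewrite sum_nat_eq0.
by move=> /forallP/(_ v); rewrite eq_sym uv /= /adj; case: (D u v || D v u).
Qed.

Lemma hermAdj_ipow u v : u != v -> H u v = 'i ^+ arc_code D u v.
Proof.
move=> uv; have := hermAdj_semicomplete uv; rewrite !mxE /arc_code.
case: (D u v); case: (D v u) => //= _; rewrite ?expr0 ?expr1 //.
by rewrite exprS sqrCi mulrN1.
Qed.

(* Row u of H^2 = n - (n - 1) H, paired with column v and scaled by H_vu. *)
Lemma hermAdj_negative_triangles : negative_triangles D.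
Proof.
move=> u v w0 uv; pose P w := (w != u) && (w != v).
have cardP : #|P| = n.-1.
  have := cardD1 v (predC1 u); rewrite cardC1 card_ord inE eq_sym uv /= add1n.
  by move=> /(congr1 predn) /= ->; apply: eq_card => w; rewrite !inE andbC.
have Hvu : H u v * H v u = 1 by rewrite hermAdj_mul_sym hermAdj_semicomplete.
have sum_tri : \sum_w H u w * H w v * H v u = 1 - n%:R.
  have := congr1 (fun x => x * H v u) (hermAdj_sqr_entry u v).
  rewrite (negbTE uv) mulr0n mul0r mulrDl -mulrA Hvu mulr1 mulr_suml => e.
  by apply/eqP; rewrite -subr_eq0; apply/eqP; rewrite -[RHS]e; ring.
have : \sum_(w | P w) 'i ^+ (arc_code D u w + arc_code D w v + arc_code D v u)
       = - #|P|%:R :> algC.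
  have -> : - #|P|%:R = 1 - n%:R :> algC.
    by rewrite cardP -[in RHS](prednK n_gt0) -natr1; ring.
  rewrite -sum_tri [RHS](bigID P) /= [X in _ = _ + X]big1 ?addr0; last first.
    move=> w; rewrite negb_and !negbK => /orP[] /eqP ->.
      by rewrite hermAdj_diag !mul0r.
    by rewrite hermAdj_diag mulr0 mul0r.
  apply: eq_bigr => w /andP[wu wv].
  by rewrite !exprD -!hermAdj_ipow // eq_sym.
by move=> /ipow_sum_eq_opp_card tri w0u w0v; apply: (tri w0); apply/andP.
Qed.

End HermitianAdjacency.

Fixpoint bitseqs (L : nat) : seq bitseq :=
  if L is L'.+1 then [seq b :: s | b <- [:: true; false], s <- bitseqs L']
  else [:: [::]].

Lemma bitseqs_size (s : bitseq) : s \in bitseqs (size s).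
Proof. by elim: s => [|b s IHs] //; apply/allpairsPdep; exists b, s; case: b. Qed.

(* Loopless relations on [0, N) are encoded by one bit per off-diagonal pair. *)
Definition offdiag_pairs N : seq (nat * nat) :=
  [seq p <- [seq (i, j) | i <- iota 0 N, j <- iota 0 N] | p.1 != p.2].

Definition rel_of_bits N (s : bitseq) : rel nat :=
  fun i j => nth false s (index (i, j) (offdiag_pairs N)).

Definition nat_arcs (a : seq (nat * nat)) : rel nat := fun i j => (i, j) \in a.

Definition semicompleteb N (r : rel nat) :=
  all (fun i => all (fun j => (i != j) ==> r i j || r j i) (iota 0 N)) (iota 0 N).

Definition negative_trianglesb N (r : rel nat) :=
  all (fun u => all (fun v => all (fun w => [&& u != v, w != u & w != v] ==>
    ((arc_code r u w + arc_code r w v + arc_code r v u) %% 4 == 2))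
  (iota 0 N)) (iota 0 N)) (iota 0 N).

Definition iso_by_perm N (r K : rel nat) :=
  has (fun p => all (fun i => all (fun j => r i j == K (nth 0 p i) (nth 0 p j))
    (iota 0 N)) (iota 0 N)) (permutations (iota 0 N)).

(* Nested conditionals, so that call-by-value evaluation skips the later tests
   on the candidates that fail the earlier ones. *)
Definition classified N (targets : seq (seq (nat * nat))) :=
  all (fun s => let r := rel_of_bits N s in
     if semicompleteb N r then
       if negative_trianglesb N r then
         has (fun a => iso_by_perm N r (nat_arcs a)) targets
       else true
     else true)
    (bitseqs (size (offdiag_pairs N))).

Lemma all_iota_ord N (P : pred nat) : (forall u : 'I_N, P u) -> all P (iota 0 N).
Proof.
move=> P_ord; apply/allP => i; rewrite mem_iota => /= ltiN.
exact: (P_ord (Ordinal ltiN)).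
Qed.

Section Enumeration.
Variables (n : nat) (D : rel 'I_n.+1).
Hypothesis Dloopless : digraph_loopless D.
Local Notation N := n.+1.

Definition bits_of_rel : bitseq :=
  [seq D (inord p.1) (inord p.2) | p <- offdiag_pairs N].

Lemma rel_of_bits_of_rel (u v : 'I_N) : rel_of_bits N bits_of_rel u v = D u v.
Proof.
rewrite /rel_of_bits /bits_of_rel; have [-> | uv] := eqVneq u v.
  rewrite nth_default; first by move/negbTE: (Dloopless v).
  by rewrite size_map memNindex // mem_filter /= eqxx.
have uv_in : ((u : nat), (v : nat)) \in offdiag_pairs N.
  rewrite mem_filter; apply/andP; split; first exact: uv.
  by apply/allpairsPdep; exists (u : nat), (v : nat); rewrite !mem_iota !ltn_ord.
by rewrite (nth_map (0, 0)) ?index_mem // nth_index //= !inord_val.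
Qed.

Lemma semicompleteb_bits :
  semicomplete D -> semicompleteb N (rel_of_bits N bits_of_rel).
Proof.
move=> Dcomplete; apply: all_iota_ord => u; apply: all_iota_ord => v.
by rewrite !rel_of_bits_of_rel; apply/implyP; apply: Dcomplete.
Qed.

Lemma negative_trianglesb_bits :
  negative_triangles D -> negative_trianglesb N (rel_of_bits N bits_of_rel).
Proof.
move=> Dtri; apply: all_iota_ord => u; apply: all_iota_ord => v.
apply: all_iota_ord => w.
apply/implyP => /and3P[uv wu wv]; rewrite /arc_code !rel_of_bits_of_rel.
by apply/eqP; apply: Dtri.
Qed.

Lemma iso_by_perm_bits a :
  iso_by_perm N (rel_of_bits N bits_of_rel) (nat_arcs a) ->
  digraph_iso D (@arcs_of N a).
Proof.
move=> /hasP[p]; rewrite mem_permutations => perm_p iso_p.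
have uniq_p : uniq p by rewrite (perm_uniq perm_p) iota_uniq.
have size_p : size p = N by rewrite (perm_size perm_p) size_iota.
have p_lt i : i < N -> nth 0 p i < N.
  by move=> ltiN; rewrite -[_ < N](mem_iota 0) -(perm_mem perm_p) mem_nth ?size_p.
pose f (u : 'I_N) : 'I_N := inord (nth 0 p u).
have fK u : (f u : nat) = nth 0 p u by rewrite inordK ?p_lt.
have f_inj : injective f.
  move=> u v /(congr1 (@nat_of_ord N)); rewrite !fK => /eqP.
  by rewrite nth_uniq ?size_p // => /eqP /val_inj.
exists f; split; first exact: injF_bij.
move=> u v; rewrite -rel_of_bits_of_rel /arcs_of !fK.
move/allP: iso_p => /(_ u); rewrite mem_iota ltn_ord => /(_ isT).
by move/allP => /(_ v); rewrite mem_iota ltn_ord => /(_ isT) /eqP.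
Qed.

Lemma classified_iso targets : semicomplete D -> negative_triangles D ->
  classified N targets -> exists2 a, a \in targets & digraph_iso D (@arcs_of N a).
Proof.
move=> Dcomplete Dtri /allP /(_ bits_of_rel).
rewrite -[X in bitseqs X](size_map (fun p => D (inord p.1) (inord p.2))) bitseqs_size.
rewrite /= semicompleteb_bits // negative_trianglesb_bits //=.
by move=> /(_ isT) /hasP[a a_in /iso_by_perm_bits]; exists a.
Qed.

End Enumeration.

Lemma classified2 : classified 2 [:: [:: (0, 1); (1, 0)]; [:: (0, 1)]].
Proof. by vm_compute. Qed.

Lemma classified3 : classified 3 [:: [:: (0, 1); (1, 0); (0, 2); (2, 1)]].
Proof. by vm_compute. Qed.

Lemma classified4 : classified 4
  [:: [:: (0, 1); (1, 2); (2, 3); (3, 0); (0, 2); (2, 0); (1, 3); (3, 1)]].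
Proof. by vm_compute. Qed.

Theorem proposition5p2 (n : nat) (D : rel 'I_n.+1)
  (hD : digraph_loopless D) (hspec : H_spectrum_is_main D) :
  digraph_iso D K1 \/ digraph_iso D K2 \/ digraph_iso D T2 \/
  digraph_iso D K3' \/ digraph_iso D K4'.
Proof.
case: n D hD hspec => [|n] D hD hspec.
  left; exists id; split; first by exists id.
  by move=> u v; rewrite !ord1; apply/negbTE.
have Dcomplete := hermAdj_semicomplete hD hspec (ltn0Sn n).
have Dtri := hermAdj_negative_triangles hD hspec (ltn0Sn n).
move: Dcomplete Dtri (negative_triangles_order_le4 Dcomplete Dtri).
case: n D hD {hspec} => [|[|[|n]]] D hD Dcomplete Dtri le4 //.
- have [a] := classified_iso hD Dcomplete Dtri classified2.
  by rewrite !inE => /orP[] /eqP -> iso; [right; left | right; right; left].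
- have [a] := classified_iso hD Dcomplete Dtri classified3.
  by rewrite inE => /eqP -> iso; do 3!right; left.
- have [a] := classified_iso hD Dcomplete Dtri classified4.
  by rewrite inE => /eqP -> iso; do 4!right.
Qed.
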